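(* Consider a 3-S 3-D MUN-D (as in the context) in which the min-cut between $S_i$ and $T_j$ is at least $1$ for all $i\neq j$. Let $n'$ be a positive integer, $n=2n'+1$, with $p\nmid 2n'+1$; let $m$ be such that $n\mid p^m-1$ and $\alpha\in\mathbb{F}_{p^m}$ of multiplicative order $n$. Regard the LECs $\underline{\varepsilon}$ as indeterminates and let $\hat M_{ij}=\mathrm{diag}\big(M_{ij}(\alpha^0),\dots,M_{ij}(\alpha^{n-1})\big)$ (invertible over $\mathbb{F}_{p^m}(\underline{\varepsilon})$). Put $\hat U=\hat M_{12}^{-1}\hat M_{32}\hat M_{31}^{-1}\hat M_{21}\hat M_{23}^{-1}\hat M_{13}$, $\hat R=\hat M_{13}\hat M_{23}^{-1}$, $\hat S=\hat M_{12}\hat M_{32}^{-1}$, $W=[1\ 1\ \cdots\ 1]^T$ of length $n$, and $V_1=[W\ \hat UW\ \cdots\ \hat U^{n'}W]$ ($n\times(n'+1)$), $V_2=[\hat RW\ \hat R\hat UW\ \cdots\ \hat R\hat U^{n'-1}W]$ ($n\times n'$), $V_3=[\hat S\hat UW\ \hat S\hat U^2W\ \cdots\ \hat S\hat U^{n'}W]$ ($n\times n'$). If $$\mathrm{Rank}[V_1\ \ \hat M_{11}^{-1}\hat M_{21}V_2]=\mathrm{Rank}[\hat M_{12}^{-1}\hat M_{22}V_2\ \ V_1]=\mathrm{Rank}[\hat M_{13}^{-1}\hat M_{33}V_3\ \ V_1]=2n'+1$$ over $\mathbb{F}_{p^m}(\underline{\varepsilon})$, then there is an assignment of values to the LECs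 from a finite extension of $\mathbb{F}_{p^m}$ under which, in the system $Y_j=\sum_{i=1}^3\hat M_{ij}V_iX_i'$ ($j=1,2,3$) with $X_1'$ of length $n'+1$ and $X_2',X_3'$ of length $n'$, each $X_j'$ can be exactly recovered from $Y_j$ (i.e. there is a matrix $G_j$ with $G_jY_j=X_j'$ for all $X_1',X_2',X_3'$).
   Context: A three-source three-destination multiple unicast network with delays (3-S 3-D MUN-D) is a finite directed acyclic graph whose links each carry one symbol of $\mathbb{F}_{p^m}$ per time unit with unit delay, with sources $S_1,S_2,S_3$ each generating one process and destinations $T_1,T_2,T_3$ each with one output, $T_i$ demanding the process of $S_i$; the min-cut between $S_i$ and $T_i$ is $1$. Linear network coding with time-invariant local encoding coefficients (LECs) $\underline{\varepsilon}$ is used (each link symbol at time $t+1$ is an LEC-weighted combination of the source symbol at its tail, if any, and of the incoming link symbols of its tail at time $t$; destination outputs are LEC-weighted combinations of incoming link symbols of the previous time). The transfer function from $S_i$ to $T_j$ is $D^{d'_{min}}M_{ij}(D)$, $M_{ij}(D)=\sum_{d=0}^{d_{max}}M_{ij}^{(d)}D^d$, with $d'_{min}$ the minimum path delay over all pairs and coefficients polynomial in $\underline{\varepsilon}$. Meaning of the model: each source transmits $n>d_{max}$ generations preceded by a cyclic prefix of its last $d_{max}$ generations, after applying a length-$n$ DFT (with parameter $\alpha$) to the precoded block $V_iX_i'$; each destination discards the prefix and applies the inverse DFT, yielding $Y_j=\sum_i\hat M_{ij}V_iX_i'$. *)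

From HB Require Import structures.
From mathcomp Require Import all_boot all_order all_algebra all_field.
From mathcomp Require Import fraction mpoly.
Set Implicit Arguments. Unset Strict Implicit. Unset Printing Implicit Defensive.
Import Order.TTheory GRing.Theory Num.Theory.
Local Open Scope ring_scope.

Record network := Network {
  node : finType;
  link : finType;
  ltail : link -> node;
  lhead : link -> node;
  src : 'I_3 -> node;
  dst : 'I_3 -> node }.

Definition adj_avoid (N : network) (C : {set link N}) : rel (node N) :=
  fun u v => [exists e, (e \notin C) && (ltail e == u) && (lhead e == v)].

Definition acyclic (N : network) : Prop :=
  forall e : link N, ~~ connect (adj_avoid set0) (lhead e) (ltail e).

Definition reach_avoid (N : network) (C : {set link N}) (s t : node N) : bool :=
  [exists e, (e \notin C) && (ltail e == s) && connect (adj_avoid C) (lhead e) t].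

Definition mincut (N : network) (s t : node N) : nat :=
  \big[minn/#|link N|]_(C : {set link N} | ~~ reach_avoid C s t) #|C|.

(* Local encoding coefficients (LECs), as indeterminates.                   *)
(*   inl (inl (i, e)) : coefficient of source process i on link e           *)
(*                      (used when the tail of e is S_i)                    *)
(*   inl (inr (e', e)): coefficient of incoming link e' on link e           *)
(*                      (used when head e' = tail e)                        *)
(*   inr (e, j)       : coefficient of incoming link e at output of T_j     *)
(*                      (used when head e = T_j)                            *)
Definition LEC (N : network) : finType :=
  (('I_3 * link N + link N * link N) + link N * 'I_3)%type.

Definition nLEC (N : network) : nat := #|LEC N|.

Section Transfer.
Variables (F : fieldType) (N : network).
Local Notation MP := {mpoly F[nLEC N]}.

Definition lec (l : LEC N) : MP := 'X_(enum_rank l).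

(* g i k e : sum over paths S_i -> ... -> e using k+1 links of the product of
   the LECs along the path (source LEC, then link-to-link LECs) *)
Fixpoint gpath (i : 'I_3) (k : nat) (e : link N) : MP :=
  match k with
  | 0 => if ltail e == src N i then lec (inl (inl (i, e))) else 0
  | k'.+1 => \sum_(e' : link N | lhead e' == ltail e)
               lec (inl (inr (e', e))) * gpath i k' e'
  end.

(* coefficient of D^(k+2) in the transfer function from S_i to T_j:
   paths with k+1 links have delay k+2 (one unit per link plus one unit at
   the destination output). In an acyclic network paths have < #|link| + 1
   links, so k < #|link| suffices. *)
Definition tcoef (i j : 'I_3) (k : nat) : MP :=
  \sum_(e : link N | lhead e == dst N j) gpath i k e * lec (inr (e, j)).

Definition transfer (i j : 'I_3) : {poly MP} :=
  \sum_(k < #|link N|) (tcoef i j k)%:P * 'X^(k.+2).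

Definition dmin : nat :=
  \big[minn/(#|link N|.+2)]_(t : 'I_3 * 'I_3 * 'I_#|link N|
                              | tcoef t.1.1 t.1.2 t.2 != 0) (t.2 : nat).+2.

(* M_ij(D), with transfer S_i -> T_j = D^dmin * M_ij(D) *)
Definition Mpoly (i j : 'I_3) : {poly MP} :=
  \sum_(k < #|link N|) (tcoef i j k)%:P * 'X^(k.+2 - dmin).

Definition Meval (alpha : F) (i j : 'I_3) (k : nat) : MP :=
  (Mpoly i j).[(alpha ^+ k)%:MP].

End Transfer.

(* The precoding scheme, over an arbitrary field K, given the nine n x n    *)
(* matrices Mh i j = \hat M_{i+1,j+1}, with n = 2n'+1.                      *)
Section Scheme.
Variables (K : fieldType) (n' : nat).
Local Notation n := (n'.*2).+1.
Variable Mh : 'I_3 -> 'I_3 -> 'M[K]_n.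

Definition i1 : 'I_3 := 0. Definition i2 : 'I_3 := 1. Definition i3 : 'I_3 := 2.

Definition Uhat : 'M[K]_n :=
  invmx (Mh i1 i2) *m Mh i3 i2 *m invmx (Mh i3 i1) *m Mh i2 i1
    *m invmx (Mh i2 i3) *m Mh i1 i3.
Definition Rhat : 'M[K]_n := Mh i1 i3 *m invmx (Mh i2 i3).
Definition Shat : 'M[K]_n := Mh i1 i2 *m invmx (Mh i3 i2).

Definition Wvec : 'cV[K]_n := const_mx 1.

Definition V1 : 'M[K]_(n, n'.+1) :=
  \matrix_(r < n, k < n'.+1) (Uhat ^+ k *m Wvec) r 0.
Definition V2 : 'M[K]_(n, n') :=
  \matrix_(r < n, k < n') (Rhat *m Uhat ^+ k *m Wvec) r 0.
Definition V3 : 'M[K]_(n, n') :=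
  \matrix_(r < n, k < n') (Shat *m Uhat ^+ k.+1 *m Wvec) r 0.

Definition Yout (j : 'I_3) (X1 : 'cV[K]_(n'.+1)) (X2 X3 : 'cV[K]_n') : 'cV[K]_n :=
  Mh i1 j *m V1 *m X1 + Mh i2 j *m V2 *m X2 + Mh i3 j *m V3 *m X3.

Definition decodable : Prop :=
  [/\ exists G1 : 'M[K]_(n'.+1, n), forall X1 X2 X3, G1 *m Yout i1 X1 X2 X3 = X1,
      exists G2 : 'M[K]_(n', n), forall X1 X2 X3, G2 *m Yout i2 X1 X2 X3 = X2
    & exists G3 : 'M[K]_(n', n), forall X1 X2 X3, G3 *m Yout i3 X1 X2 X3 = X3].

Definition rank_conditions : Prop :=
  [/\ \rank (row_mx V1 (invmx (Mh i1 i1) *m Mh i2 i1 *m V2)) = n,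
      \rank (row_mx (invmx (Mh i1 i2) *m Mh i2 i2 *m V2) V1) = n
    & \rank (row_mx (invmx (Mh i1 i3) *m Mh i3 i3 *m V3) V1) = n].

End Scheme.

(* \hat M_ij over an arbitrary field K, obtained from M_ij(alpha^k) (a
   polynomial in the LECs) through a map phi into K (the embedding into the
   fraction field, or evaluation at an assignment of the LECs). *)
Definition Mhat (F : fieldType) (N : network) (K : fieldType)
  (phi : {mpoly F[nLEC N]} -> K) (alpha : F) (n' : nat) (i j : 'I_3)
  : 'M[K]_((n'.*2).+1) :=
  diag_mx (\row_(k < (n'.*2).+1) phi (Meval N alpha i j k)).

Definition lec_eval (F : fieldType) (N : network) (L : fieldExtType F)
  (eps : LEC N -> L) (q : {mpoly F[nLEC N]}) : L :=
  mmap (in_alg L) (fun v => eps (enum_val v)) q.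

Definition lec_ratfun (F : fieldType) (N : network) : fieldType :=
  {fraction {mpoly F[nLEC N]}}.
Definition to_ratfun (F : fieldType) (N : network)
  (q : {mpoly F[nLEC N]}) : lec_ratfun F N := FracField.tofrac q.

(* All transfer matrices are diagonal, so [V1], [V2], [V3] are
   explicit in the powers of the ratio [u = M32 M21 M13 / (M12 M31 M23)] and the
   interference at every destination is aligned in the column space of
   [M1j V1]: [M31 V3 = M21 V2], while [M32 V3] and [M23 V2] consist of columns
   of [M12 V1] and [M13 V1].  Hence the rank conditions give decodability over
   any field.  Clearing denominators turns each rank condition into the
   nonvanishing of the image of a determinant that is a polynomial in the
   LECs.  Each [M_ij(alpha^k)] is a nonzero polynomial: setting the LECs of one
   S_i-T_j path to 1 and all others to 0 leaves a power of [alpha].  The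
   product of all these polynomials is nonzero because the rank conditions hold
   over the fraction field, and a nonzero polynomial has a non-root in any
   finite extension of F with enough elements. *)

From HB Require Import structures.
From mathcomp Require Import all_boot all_order all_algebra all_field.
From mathcomp Require Import fraction mpoly.
From mathcomp.algebra_tactics Require Import ring.
Set Implicit Arguments. Unset Strict Implicit. Unset Printing Implicit Defensive.
Import GRing.Theory.
Local Open Scope ring_scope.

Section DiagonalMatrices.
Variables (K : fieldType) (n : nat).
Implicit Types (x : 'rV[K]_n).

Lemma unitmx_diag x : (forall i, x 0 i != 0) -> diag_mx x \in unitmx.
Proof. by move=> x_neq0; rewrite unitmxE det_diag unitfE; apply/prodf_neq0. Qed.

Lemma invmx_diag x :
  (forall i, x 0 i != 0) -> invmx (diag_mx x) = diag_mx (\row_i (x 0 i)^-1).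
Proof.
move=> x_neq0; rewrite -[RHS](mulKmx (unitmx_diag x_neq0)) mulmx_diag.
suff -> : \row_i (x 0 i * (\row_i (x 0 i)^-1) 0 i) = const_mx 1.
  by rewrite diag_const_mx mulmx1.
by apply/rowP => i; rewrite !mxE divff.
Qed.

Lemma diag_mx_expr x k : diag_mx x ^+ k = diag_mx (\row_i (x 0 i ^+ k)).
Proof.
elim: k => [|k IHk]; first by apply/matrixP => i j; rewrite !mxE expr0.
rewrite exprS IHk -mulmxE mulmx_diag; congr diag_mx.
by apply/rowP => i; rewrite !mxE exprS.
Qed.

End DiagonalMatrices.

Lemma rank_full_det (K : fieldType) (n m : nat) (e : m = n) (A : 'M[K]_(n, m)) :
  (\rank A == n) = (\det (castmx (erefl n, e) A) != 0).
Proof.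
by case: n / e in A *; rewrite castmx_id -unitfE -unitmxE -row_free_unit.
Qed.

Lemma left_inverse_rank (K : fieldType) (n m : nat) (A : 'M[K]_(n, m)) :
  \rank A = m -> exists H : 'M_(m, n), H *m A = 1%:M.
Proof.
move=> rankA; have /row_freeP[B AtB] : row_free A^T by rewrite /row_free mxrank_tr rankA.
by exists B^T; rewrite -[A]trmxK -trmx_mul AtB trmx1.
Qed.

Lemma decode_first_block (K : fieldType) (n k l : nat) (M : 'M[K]_n)
    (A : 'M[K]_(n, k + l)) :
  M \in unitmx -> \rank A = (k + l)%N ->
  exists G : 'M_(k, n), forall (X : 'cV_k) (Z : 'cV_l), G *m (M *m (A *m col_mx X Z)) = X.
Proof.
move=> M_unit /left_inverse_rank[H HA]; exists (row_mx 1%:M 0 *m H *m invmx M) => X Z.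
by rewrite -!mulmxA mulKmx // (mulmxA H) HA mul1mx mul_row_col mul1mx mul0mx addr0.
Qed.

Section PowerMatrix.
Variables (R : comNzRingType) (n k N : nat).
Implicit Types (x P Q : 'I_n -> R) (e : 'I_k -> nat).

Definition powmx x P Q e : 'M[R]_(n, k) :=
  \matrix_(r, c) (x r * P r ^+ e c * Q r ^+ (N - e c)).

Lemma eq_powmx x x' P P' Q Q' e :
  x =1 x' -> P =1 P' -> Q =1 Q' -> powmx x P Q e = powmx x' P' Q' e.
Proof. by move=> ex eP eQ; apply/matrixP => r c; rewrite !mxE ex eP eQ. Qed.

End PowerMatrix.

Lemma map_powmx (R S : comNzRingType) (f : {rmorphism R -> S}) (n k N : nat)
    (x P Q : 'I_n -> R) (e : 'I_k -> nat) :
  map_mx f (powmx N x P Q e) = powmx N (f \o x) (f \o P) (f \o Q) e.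
Proof. by apply/matrixP => r c; rewrite !mxE /= !rmorphM !rmorphXn. Qed.

Lemma powmx_diag (K : fieldType) (n k N : nat) (x P Q : 'I_n -> K)
    (e : 'I_k -> nat) (A : 'M[K]_(n, k)) :
  (forall r, Q r != 0) -> (forall c, e c <= N)%N ->
  (forall r c, A r c = x r * (P r / Q r) ^+ e c) ->
  powmx N x P Q e = diag_mx (\row_r Q r ^+ N) *m A.
Proof.
move=> Q_neq0 e_le AE; apply/matrixP => r c.
rewrite mul_diag_mx !mxE AE expr_div_n -{2}(subnKC (e_le c)) exprD.
by have := Q_neq0 r => Qr_neq0; field; rewrite expf_neq0.
Qed.

(* Multiplying row [r] by [s r * Q r ^+ N] clears the denominators. *)
Lemma rank_row_mx_powmx (K : fieldType) (n k1 k2 N : nat) (e : (k1 + k2)%N = n)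
    (s x1 x2 P Q : 'I_n -> K) (e1 : 'I_k1 -> nat) (e2 : 'I_k2 -> nat)
    (A1 : 'M[K]_(n, k1)) (A2 : 'M[K]_(n, k2)) :
  (forall r, s r != 0) -> (forall r, Q r != 0) ->
  (forall c, e1 c <= N)%N -> (forall c, e2 c <= N)%N ->
  (forall r c, s r * A1 r c = x1 r * (P r / Q r) ^+ e1 c) ->
  (forall r c, s r * A2 r c = x2 r * (P r / Q r) ^+ e2 c) ->
  (\rank (row_mx A1 A2) == n) =
  (\det (castmx (erefl n, e) (row_mx (powmx N x1 P Q e1) (powmx N x2 P Q e2))) != 0).
Proof.
move=> s_neq0 Q_neq0 e1_le e2_le A1E A2E.
have -> : row_mx (powmx N x1 P Q e1) (powmx N x2 P Q e2) =
    diag_mx (\row_r Q r ^+ N) *m (diag_mx (\row_r s r) *m row_mx A1 A2).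
  by rewrite !mul_mx_row; congr row_mx; apply: powmx_diag => // r c;
    rewrite mul_diag_mx !mxE.
rewrite -rank_full_det mulmxA (eqmxMfull _ _) ?row_full_unit //.
rewrite mulmx_diag unitmx_diag // => r.
by rewrite !mxE mulf_neq0 ?expf_neq0.
Qed.

Section RankPolynomials.
Variables (R : comNzRingType) (n' : nat).
Local Notation n := (n'.*2).+1.
Variable a : 'I_3 -> 'I_3 -> 'I_n -> R.

Definition cycle_num (r : 'I_n) : R := a i3 i2 r * a i2 i1 r * a i1 i3 r.
Definition cycle_den (r : 'I_n) : R := a i1 i2 r * a i3 i1 r * a i2 i3 r.

Lemma dim_V1V2 : (n'.+1 + n')%N = n. Proof. by rewrite addSn addnn. Qed.
Lemma dim_V2V1 : (n' + n'.+1)%N = n. Proof. by rewrite addnS addnn. Qed.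

Local Notation pmx x e := (powmx n' x cycle_num cycle_den e).

(* The matrices of the three rank conditions, with row [r] multiplied by
   [M11 M23], [M12 M23] and [M13 M32] respectively, and by [cycle_den r ^+ n']. *)
Definition rank_det1 : R :=
  \det (castmx (erefl n, dim_V1V2)
    (row_mx (pmx (fun r => a i1 i1 r * a i2 i3 r) val)
            (pmx (fun r => a i2 i1 r * a i1 i3 r) val))).

Definition rank_det2 : R :=
  \det (castmx (erefl n, dim_V2V1)
    (row_mx (pmx (fun r => a i2 i2 r * a i1 i3 r) val)
            (pmx (fun r => a i1 i2 r * a i2 i3 r) val))).

Definition rank_det3 : R :=
  \det (castmx (erefl n, dim_V2V1)
    (row_mx (pmx (fun r => a i3 i3 r * a i1 i2 r) (fun c : 'I_n' => c.+1))
            (pmx (fun r => a i1 i3 r * a i3 i2 r) val))).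

End RankPolynomials.

Section RmorphRankPolynomials.
Variables (R S : comNzRingType) (f : {rmorphism R -> S}) (n' : nat).
Variable a : 'I_3 -> 'I_3 -> 'I_(n'.*2).+1 -> R.
Local Notation fa := (fun i j r => f (a i j r)).

Let map_pmx k i j i' j' (e : 'I_k -> nat) :
  map_mx f (powmx n' (fun r => a i j r * a i' j' r) (cycle_num a) (cycle_den a) e) =
  powmx n' (fun r => fa i j r * fa i' j' r) (cycle_num fa) (cycle_den fa) e.
Proof. by rewrite map_powmx; apply: eq_powmx => r; rewrite /= !rmorphM. Qed.

Lemma rmorph_rank_det1 : f (rank_det1 a) = rank_det1 fa.
Proof. by rewrite -det_map_mx map_castmx map_row_mx !map_pmx. Qed.

Lemma rmorph_rank_det2 : f (rank_det2 a) = rank_det2 fa.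
Proof. by rewrite -det_map_mx map_castmx map_row_mx !map_pmx. Qed.

Lemma rmorph_rank_det3 : f (rank_det3 a) = rank_det3 fa.
Proof. by rewrite -det_map_mx map_castmx map_row_mx !map_pmx. Qed.

End RmorphRankPolynomials.

Section DiagonalScheme.
Variables (K : fieldType) (n' : nat).
Local Notation n := (n'.*2).+1.
Variable d : 'I_3 -> 'I_3 -> 'I_n -> K.

Definition diag_transfer (i j : 'I_3) : 'M[K]_n := diag_mx (\row_r d i j r).

Hypothesis d_neq0 : forall i j r, d i j r != 0.

Local Notation M := diag_transfer.
Local Notation u r := (cycle_num d r / cycle_den d r).

Lemma diag_transfer_unit i j : M i j \in unitmx.
Proof. by apply: unitmx_diag => r; rewrite mxE. Qed.

Lemma invmx_diag_transfer i j : invmx (M i j) = diag_mx (\row_r (d i j r)^-1).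
Proof.
rewrite invmx_diag => [|r]; rewrite ?mxE //.
by congr diag_mx; apply/rowP => r; rewrite !mxE.
Qed.

Lemma cycle_den_neq0 r : cycle_den d r != 0.
Proof. by rewrite !mulf_neq0. Qed.

Lemma Uhat_diag : Uhat M = diag_mx (\row_r u r).
Proof.
rewrite /Uhat !invmx_diag_transfer !mulmx_diag; congr diag_mx; apply/rowP => r.
have := d_neq0 i1 i2 r; have := d_neq0 i3 i1 r; have := d_neq0 i2 i3 r.
by rewrite !mxE /cycle_num /cycle_den => h1 h2 h3; field; rewrite h1 h2 h3.
Qed.

Lemma Uhat_expr_Wvec k r : (Uhat M ^+ k *m Wvec K n') r 0 = u r ^+ k.
Proof. by rewrite Uhat_diag diag_mx_expr mul_diag_mx !mxE mulr1. Qed.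

Lemma V1E r c : V1 M r c = u r ^+ c.
Proof. by rewrite mxE; apply: Uhat_expr_Wvec. Qed.

Lemma V2E r c : V2 M r c = d i1 i3 r / d i2 i3 r * u r ^+ c.
Proof.
rewrite mxE /Rhat invmx_diag_transfer mulmx_diag -mulmxA mul_diag_mx.
by rewrite mxE Uhat_expr_Wvec !mxE.
Qed.

Lemma V3E r c : V3 M r c = d i1 i2 r / d i3 i2 r * u r ^+ c.+1.
Proof.
rewrite mxE /Shat invmx_diag_transfer mulmx_diag -mulmxA mul_diag_mx.
by rewrite mxE Uhat_expr_Wvec !mxE.
Qed.

Lemma align_T1 : M i3 i1 *m V3 M = M i2 i1 *m V2 M.
Proof.
apply/matrixP => r c; rewrite !mul_diag_mx [LHS]mxE [RHS]mxE V2E V3E !mxE exprS.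
have := d_neq0 i1 i2 r; have := d_neq0 i3 i1 r; have := d_neq0 i2 i3 r.
have := d_neq0 i3 i2 r; rewrite /cycle_num /cycle_den; move: (_ ^+ c) => x h1 h2 h3 h4.
by field; rewrite h1 h2 h3 h4.
Qed.

Lemma align_T2 : M i3 i2 *m V3 M = colsub (lift ord0) (M i1 i2 *m V1 M).
Proof.
apply/matrixP => r c; rewrite !mul_diag_mx [LHS]mxE [RHS]mxE mxE V1E V3E !mxE lift0.
by have := d_neq0 i3 i2 r; move: (_ ^+ c.+1) => x h; field.
Qed.

Lemma align_T3 : M i2 i3 *m V2 M = colsub (widen_ord (leqnSn n')) (M i1 i3 *m V1 M).
Proof.
apply/matrixP => r c; rewrite !mul_diag_mx [LHS]mxE [RHS]mxE mxE V1E V2E !mxE.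
by have := d_neq0 i2 i3 r; move: (_ ^+ c) => x h; field.
Qed.

Lemma decodable_rank_conditions : rank_conditions M -> decodable M.
Proof.
have colsubE k (g : 'I_n' -> 'I_k) (A : 'M[K]_(n, k)) : colsub g A = A *m colsub g 1%:M.
  by rewrite mulmx_colsub mulmx1.
case=> rank1 rank2 rank3; split.
- have [G GE] := decode_first_block (diag_transfer_unit i1 i1)
    (etrans rank1 (esym (dim_V1V2 n'))).
  exists G => X1 X2 X3; rewrite -[RHS](GE X1 (X2 + X3)); congr (_ *m _).
  rewrite /Yout mul_row_col mulmxDr !mulmxA mulmxV ?diag_transfer_unit // mul1mx.
  by rewrite align_T1 mulmxDr addrA.
- have [G GE] := decode_first_block (diag_transfer_unit i1 i2)
    (etrans rank2 (esym (dim_V2V1 n'))).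
  exists G => X1 X2 X3.
  rewrite -[RHS](GE X2 (X1 + colsub (lift ord0) 1%:M *m X3)); congr (_ *m _).
  rewrite /Yout mul_row_col mulmxDr !mulmxA mulmxV ?diag_transfer_unit // mul1mx.
  by rewrite align_T2 colsubE !mulmxDr !mulmxA addrCA addrA.
- have [G GE] := decode_first_block (diag_transfer_unit i1 i3)
    (etrans rank3 (esym (dim_V2V1 n'))).
  exists G => X1 X2 X3.
  rewrite -[RHS](GE X3 (X1 + colsub (widen_ord (leqnSn n')) 1%:M *m X2)); congr (_ *m _).
  rewrite /Yout mul_row_col mulmxDr !mulmxA mulmxV ?diag_transfer_unit // mul1mx.
  by rewrite align_T3 colsubE !mulmxDr !mulmxA addrC.
Qed.

Lemma invmx_mul_transferE i j i' j' k (A : 'M[K]_(n, k)) r c :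
  (invmx (M i j) *m M i' j' *m A) r c = (d i j r)^-1 * d i' j' r * A r c.
Proof. by rewrite invmx_diag_transfer mulmx_diag mul_diag_mx !mxE. Qed.

Let mul_neq0 i j i' j' r : d i j r * d i' j' r != 0.
Proof. by rewrite mulf_neq0. Qed.

Lemma rank_condition1E :
  (\rank (row_mx (V1 M) (invmx (M i1 i1) *m M i2 i1 *m V2 M)) == n) =
  (rank_det1 d != 0).
Proof.
apply: (rank_row_mx_powmx _ (mul_neq0 i1 i1 i2 i3) cycle_den_neq0) => [c|c|r c|r c].
- by rewrite -ltnS; exact: ltn_ord.
- exact: ltnW (ltn_ord c).
- by rewrite V1E.
rewrite invmx_mul_transferE V2E; have := d_neq0 i1 i1 r; have := d_neq0 i2 i3 r.
by move: (_ ^+ c) => x h1 h2; field; rewrite h1 h2.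
Qed.

Lemma rank_condition2E :
  (\rank (row_mx (invmx (M i1 i2) *m M i2 i2 *m V2 M) (V1 M)) == n) =
  (rank_det2 d != 0).
Proof.
apply: (rank_row_mx_powmx _ (mul_neq0 i1 i2 i2 i3) cycle_den_neq0) => [c|c|r c|r c].
- exact: ltnW (ltn_ord c).
- by rewrite -ltnS; exact: ltn_ord.
- rewrite invmx_mul_transferE V2E; have := d_neq0 i1 i2 r; have := d_neq0 i2 i3 r.
  by move: (_ ^+ c) => x h1 h2; field; rewrite h1 h2.
by rewrite V1E.
Qed.

Lemma rank_condition3E :
  (\rank (row_mx (invmx (M i1 i3) *m M i3 i3 *m V3 M) (V1 M)) == n) =
  (rank_det3 d != 0).
Proof.
apply: (rank_row_mx_powmx _ (mul_neq0 i1 i3 i3 i2) cycle_den_neq0) => [c|c|r c|r c].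
- exact: ltn_ord c.
- by rewrite -ltnS; exact: ltn_ord.
- rewrite invmx_mul_transferE V3E; have := d_neq0 i1 i3 r; have := d_neq0 i3 i2 r.
  by move: (_ ^+ c.+1) => x h1 h2; field; rewrite h1 h2.
by rewrite V1E.
Qed.

Lemma rank_conditions_det :
  rank_conditions M <-> [/\ rank_det1 d != 0, rank_det2 d != 0 & rank_det3 d != 0].
Proof.
rewrite /rank_conditions -rank_condition1E -rank_condition2E -rank_condition3E.
by split=> -[r1 r2 r3]; split; apply/eqP.
Qed.

End DiagonalScheme.

Definition scheme_poly (R : comNzRingType) (n' : nat)
    (a : 'I_3 -> 'I_3 -> 'I_(n'.*2).+1 -> R) : R :=
  rank_det1 a * rank_det2 a * rank_det3 a *
  \prod_(t : 'I_3 * 'I_3 * 'I_(n'.*2).+1) a t.1.1 t.1.2 t.2.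

Lemma scheme_poly_rmorph_neq0 (R : comNzRingType) (K : fieldType)
    (f : {rmorphism R -> K}) (n' : nat) (a : 'I_3 -> 'I_3 -> 'I_(n'.*2).+1 -> R) :
  f (scheme_poly a) != 0 <->
  (forall i j r, f (a i j r) != 0) /\
  rank_conditions (diag_transfer (fun i j r => f (a i j r))).
Proof.
rewrite /scheme_poly !rmorphM rmorph_prod !mulf_eq0 !negb_or -!andbA.
split=> [/and4P[d1 d2 d3 /prodf_neq0 fa_neq0] | [fa_neq0]].
  have fa_neq0' i j r : f (a i j r) != 0 by exact: (fa_neq0 (i, j, r)).
  split=> //; apply/(rank_conditions_det fa_neq0').
  by rewrite -rmorph_rank_det1 -rmorph_rank_det2 -rmorph_rank_det3.
move/(rank_conditions_det fa_neq0).
rewrite -rmorph_rank_det1 -rmorph_rank_det2 -rmorph_rank_det3 => -[d1 d2 d3].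
by apply/and4P; split=> //; apply/prodf_neq0 => -[[i j] r] _; apply: fa_neq0.
Qed.

Section MultivariateNonvanishing.
Variables (F L : fieldType) (f : {rmorphism F -> L}).

Section LastVariable.
Variable n : nat.
Local Notation minit m := [multinom m (widen_ord (leqnSn n) i) | i < n].

Lemma eq_mnm_last_init (m1 m2 : 'X_{1..n.+1}) :
  m1 ord_max = m2 ord_max -> minit m1 = minit m2 -> m1 = m2.
Proof.
move=> eq_last /mnmP eq_init; apply/mnmP => i.
have [lt_in|] := ltnP i n.
  have := eq_init (Ordinal lt_in); rewrite !mnmE.
  by rewrite (_ : widen_ord _ _ = i) //; apply: val_inj.
move=> le_ni; suff -> : i = ord_max by [].
by apply/val_inj/eqP; rewrite /= eqn_leq le_ni -ltnS ltn_ord.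
Qed.

Lemma mcoeff_coef_muni (p : {mpoly F[n.+1]}) k m' :
  ((muni p)`_k)@_m' =
  \sum_(m <- msupp p | (m ord_max == k) && (minit m == m')) p@_m.
Proof.
rewrite muniE coef_sum raddf_sum [RHS]big_mkcond /=; apply: eq_bigr => m _.
rewrite -mul_polyC coefCM coefXn eq_sym.
case: eqP; rewrite ?mulr1 ?mulr0 ?mcoeff0 // mcoeffZ mcoeffX.
by case: eqP; rewrite ?mulr1 ?mulr0.
Qed.

Lemma mcoeff_muni (p : {mpoly F[n.+1]}) (m : 'X_{1..n.+1}) :
  ((muni p)`_(m ord_max))@_(minit m) = p@_m.
Proof.
rewrite mcoeff_coef_muni (eq_bigl (pred1 m)) => [|m1]; last first.
  apply/andP/eqP => [[/eqP e1 /eqP e2]|->] //; exact: eq_mnm_last_init.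
have [m_supp|m_nsupp] := boolP (m \in msupp p).
  by rewrite -big_filter filter_pred1_uniq ?msupp_uniq // big_seq1.
rewrite big_seq_cond big1 => [|m1 /andP[m1_supp /eqP m1m]]; last first.
  by rewrite -m1m m1_supp in m_nsupp.
by apply/esym/eqP; rewrite mcoeff_eq0.
Qed.

Lemma msupp_coef_muni (p : {mpoly F[n.+1]}) k m' :
  m' \in msupp (muni p)`_k ->
  exists2 m, m \in msupp p & (m ord_max = k) /\ minit m = m'.
Proof.
rewrite mcoeff_msupp mcoeff_coef_muni => nz.
have /hasP[m m_supp /andP[/eqP<- /eqP<-]] :
    has (fun m : 'X_{1..n.+1} => (m ord_max == k) && (minit m == m')) (msupp p).
  apply: contraNT nz => /hasPn none; rewrite big_seq_cond big1 // => m.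
  by case/andP=> /none/negbTE ->.
by exists m.
Qed.

Lemma mmap1_last (v : 'I_n.+1 -> L) (m : 'X_{1..n.+1}) :
  mmap1 v m =
  mmap1 (fun i => v (widen_ord (leqnSn n) i)) (minit m) * v ord_max ^+ m ord_max.
Proof.
by rewrite /mmap1 big_ord_recr /=; congr (_ * _); apply: eq_bigr => i _; rewrite mnmE.
Qed.

Lemma mmap_muni (v : 'I_n.+1 -> L) (p : {mpoly F[n.+1]}) :
  mmap f v p =
  (map_poly (mmap f (fun i => v (widen_ord (leqnSn n) i))) (muni p)).[v ord_max].
Proof.
have -> : mmap f v p = \sum_(m <- msupp p) f p@_m * mmap1 v m by [].
rewrite muniE raddf_sum horner_sum; apply: eq_bigr => m _ /=.
rewrite map_polyZ map_polyXn hornerZ hornerXn /=.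
by rewrite mmapZ mmapX mmap1_last mulrA.
Qed.

End LastVariable.

Lemma eq_mmap (n : nat) (h1 h2 : 'I_n -> L) (p : {mpoly F[n]}) :
  h1 =1 h2 -> mmap f h1 p = mmap f h2 p.
Proof. by move=> eh; apply: eq_bigr => m _; rewrite (mmap1_eq _ eh). Qed.

Lemma mmap_neq0 (rs : seq L) : uniq rs ->
  forall (n : nat) (p : {mpoly F[n]}), p != 0 ->
  (forall m, m \in msupp p -> forall i, m i < size rs)%N ->
  exists v : 'I_n -> L, mmap f v p != 0.
Proof.
move=> rs_uniq; elim=> [|n IHn] p p_neq0 p_deg.
  have p_const : p = (p@_0%MM)%:MP.
    apply/mpolyP => m; rewrite mcoeffC (_ : m = 0%MM) ?eqxx ?mulr1 //.
    by apply/mnmP => -[].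
  by exists (fun=> 0); rewrite p_const mmapC fmorph_eq0 -(mpolyC_eq0 0) -p_const.
have [m0 m0_supp] : exists m0, m0 \in msupp p.
  case E: (msupp p) => [|m0 s]; last by exists m0; rewrite inE eqxx.
  by move: p_neq0; rewrite -msupp_eq0 E.
set c := (muni p)`_(m0 ord_max).
have c_neq0 : c != 0.
  apply: contraTneq m0_supp => c0.
  by rewrite mcoeff_msupp -mcoeff_muni -/c c0 mcoeff0 eqxx.
have c_deg m : m \in msupp c -> forall i, (m i < size rs)%N.
  by case/msupp_coef_muni => m1 m1_supp [_ <-] i; rewrite mnmE; apply: p_deg.
have [v' v'_neq0] := IHn c c_neq0 c_deg.
pose q := map_poly (mmap f v') (muni p).
have q_neq0 : q != 0.
  by apply: contra v'_neq0 => /eqP q0; rewrite -coef_map -/q q0 coef0.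
have size_q : (size q <= size rs)%N.
  apply/leq_sizeP => j le_j; rewrite coef_map.
  suff -> : (muni p)`_j = 0 by exact: raddf0.
  apply/mpolyP => m'; rewrite mcoeff_coef_muni mcoeff0 big_seq_cond big1 //.
  move=> m /andP[m_supp /andP[/eqP mj _]].
  by have := p_deg m m_supp ord_max; rewrite mj ltnNge le_j.
have [t t_rs t_nroot] : exists2 t, t \in rs & ~~ root q t.
  apply/hasP; apply: contraT; rewrite -all_predC => /allP all_root.
  have /(max_poly_roots q_neq0)/(_ rs_uniq) : all (root q) rs.
    by apply/allP => x /all_root /negPn.
  by rewrite ltnNge size_q.
exists (fun i => oapp v' t (insub (val i))).
rewrite mmap_muni insubF /= ?ltnn // (eq_map_poly (g := mmap f v')) // => p'.
by apply: eq_mmap => i; rewrite /= valK.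
Qed.

End MultivariateNonvanishing.

Lemma fieldExt_uniq_seq (F : finFieldType) (k : nat) :
  exists (L : fieldExtType F) (rs : seq L), uniq rs /\ (k <= size rs)%N.
Proof.
have [p p_prime pcharF] := finPcharP F.
pose M := (p * k).+1.
have Xn1_neq0 : 'X^M - 1 != 0 :> {poly F} by rewrite -size_poly_eq0 size_Xn_sub_1.
have [L [rs Drs _]] := FinSplittingFieldFor Xn1_neq0.
exists L, rs; rewrite rmorphB rmorphXn /= map_polyX rmorph1 in Drs.
have pcharL : p \in [pchar L] by rewrite pchar_lalg.
(* [M = 1 mod p], so [X^M - 1] is separable over [L]. *)
have M_neq0 : M%:R != 0 :> L.
  by rewrite /M -addn1 natrD natrM pcharf0 // mul0r add0r oner_eq0.
split; first by rewrite -separable_prod_XsubC -(eqp_separable Drs) separable_Xn_sub_1.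
have := eqp_size Drs; rewrite size_prod_XsubC size_Xn_sub_1 // => -[<-].
exact: leq_trans (leq_pmull k (prime_gt0 p_prime)) (leqnSn _).
Qed.

Lemma geq_bigmin_cond (I : eqType) (r : seq I) (P : pred I) (F : I -> nat)
    (x : nat) (i0 : I) :
  i0 \in r -> P i0 -> (\big[minn/x]_(i <- r | P i) F i <= F i0)%N.
Proof.
elim: r => [|i r IHr] //; rewrite inE big_cons => /orP[/eqP<- ->|i0r Pi0].
  exact: geq_minl.
by case: ifP => _; [apply: leq_trans (geq_minr _ _) (IHr i0r Pi0) | apply: IHr].
Qed.

Section Walks.
Variable N : network.

Definition link_succ : rel (link N) := fun e e' => lhead e == ltail e'.

Lemma reach_of_mincut_gt0 (s t : node N) :
  (0 < mincut s t)%N -> reach_avoid set0 s t.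
Proof.
apply: contraTT => nreach; rewrite -leqNgt /mincut -(cards0 (link N)).
exact: (@geq_bigmin_cond _ _ (fun C => ~~ reach_avoid C s t)
  (fun C : {set link N} => #|C|) _ set0 (mem_index_enum _) nreach).
Qed.

Lemma link_walk_of_path (x : node N) (p : seq (node N)) (e : link N) :
  path (adj_avoid set0) x p -> lhead e = x ->
  exists es, path link_succ e es /\ lhead (last e es) = last x p.
Proof.
elim: p x e => [|y p IHp] x e /=; first by exists [::].
case/andP => /existsP[e' /andP[/andP[_ /eqP tail_e'] /eqP head_e']] yp head_e.
have [es [e'es last_es]] := IHp y e' yp head_e'.
by exists (e' :: es); rewrite /= e'es andbT /link_succ head_e tail_e'.
Qed.

Lemma link_succ_connect (e e' : link N) :
  link_succ e e' -> connect (adj_avoid set0) (lhead e) (lhead e').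
Proof.
by move=> /eqP ee'; apply: connect1; apply/existsP; exists e'; rewrite inE ee' !eqxx.
Qed.

Lemma walk_connect (e : link N) (es : seq (link N)) (e' : link N) :
  path link_succ e es -> e' \in es -> connect (adj_avoid set0) (lhead e) (ltail e').
Proof.
elim: es e => [|e1 es IHes] e //= /andP[ee1 e1es].
rewrite inE => /orP[/eqP-> | e'_es]; first by rewrite (eqP ee1) connect0.
apply: connect_trans (IHes e1 e1es e'_es).
exact: link_succ_connect.
Qed.

Lemma uniq_walk (e : link N) (es : seq (link N)) :
  acyclic N -> path link_succ e es -> uniq (e :: es).
Proof.
move=> acyc; elim: es e => [|e1 es IHes] e //= /andP[ee1 e1es].
have /= /andP[e1_nes ->] := IHes e1 e1es; rewrite e1_nes !andbT.
apply/negP => /orP[/eqP ee1' | e_es].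
  by move: (acyc e); rewrite {1}(eqP ee1) -ee1' connect0.
have := connect_trans (link_succ_connect ee1) (walk_connect e1es e_es).
by move: (acyc e) => /negbTE->.
Qed.

Lemma exists_uniq_walk (s t : node N) : acyclic N -> reach_avoid set0 s t ->
  exists e es, [/\ ltail e = s, path link_succ e es, lhead (last e es) = t
                 & uniq (e :: es)].
Proof.
move=> acyc /existsP[e /andP[/andP[_ /eqP tail_e] /connectP[p ep ->]]].
have [es [e_es last_es]] := link_walk_of_path ep (erefl (lhead e)).
by exists e, es; split; rewrite ?uniq_walk.
Qed.

End Walks.

Section WalkIndicator.
Variables (F : fieldType) (N : network) (i j : 'I_3) (e0 : link N) (es : seq (link N)).
Local Notation w := (e0 :: es).

(* The LECs used by the walk [w] from [S_i] to [T_j]: setting them to [1] and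
   all others to [0] keeps exactly the contribution of [w] to the transfer. *)
Definition on_walk (l : LEC N) : bool :=
  match l with
  | inl (inl (i', e)) => (i' == i) && (e == e0)
  | inl (inr (e', e)) =>
      (e' \in w) && ((index e' w).+1 < size w)%N && (e == nth e0 w (index e' w).+1)
  | inr (e, j') => (j' == j) && (e == last e0 es)
  end.

Definition walk_point (k : 'I_(nLEC N)) : F := (on_walk (enum_val k))%:R.

Hypotheses (tail_e0 : ltail e0 = src N i) (walk_es : path (@link_succ N) e0 es)
  (head_last : lhead (last e0 es) = dst N j) (uniq_w : uniq w).

Lemma meval_lec l : meval walk_point (lec F l) = (on_walk l)%:R.
Proof. by rewrite /lec mevalXU /walk_point enum_rankK. Qed.

Lemma meval_gpath t e :
  meval walk_point (gpath F i t e) = ((t < size w)%N && (e == nth e0 w t))%:R.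
Proof.
elim: t e => [|t IHt] e /=.
  case: eqP => [tail_e|]; first by rewrite meval_lec /= eqxx.
  by rewrite meval0; case: eqP => // ->; rewrite tail_e0.
rewrite rmorph_sum /=.
under eq_bigr do rewrite rmorphM /= meval_lec IHt.
have [lt_t|le_t] := ltnP t (size w); last first.
  rewrite big1 => [|e' _]; last by rewrite mulr0.
  by rewrite ltnNge (leq_trans le_t (leqnSn t)).
pose et := nth e0 w t.
rewrite big_mkcond (bigD1 et) // big1 ?addr0 => [|e' ne]; last first.
  by case: ifP => // _; rewrite /= (negbTE ne) mulr0.
have -> : on_walk (inl (inr (et, e))) =
    (et \in w) && ((index et w).+1 < size w)%N && (e == nth e0 w (index et w).+1) by [].
rewrite mem_nth // index_uniq // /= eqxx mulr1 addr0.
case: ifP => // head_et; case: ltnP => //= lt_t1; case: eqP => // e_next.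
move/pathP: walk_es => /(_ e0 t); rewrite -ltnS => /(_ lt_t1).
by rewrite /link_succ -e_next head_et.
Qed.

Lemma meval_tcoef k : meval walk_point (tcoef F N i j k) = (k == size es)%:R.
Proof.
rewrite rmorph_sum /=.
under eq_bigr do rewrite rmorphM /= meval_lec meval_gpath.
rewrite big_mkcond (bigD1 (last e0 es)) //= big1 ?addr0 => [|e ne]; last first.
  by case: ifP => // _; rewrite /= (negbTE ne) andbF mulr0.
rewrite head_last !eqxx /= mulr1 (last_nth e0).
have [lt_k|le_k] := ltnP k (size w).
  by rewrite nth_uniq // eq_sym.
by rewrite /= eq_sym ltn_eqF.
Qed.

Lemma meval_Meval_neq0 (alpha : F) r :
  alpha != 0 -> meval walk_point (Meval N alpha i j r) != 0.
Proof.
move=> alpha_neq0.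
have size_es : (size es < #|link N|)%N.
  by rewrite cardE; apply: uniq_leq_size uniq_w _ => x _; rewrite mem_enum.
rewrite /Meval -horner_map /= mevalC /Mpoly rmorph_sum /=.
under eq_bigr do rewrite rmorphM /= map_polyC map_polyXn /= meval_tcoef.
rewrite horner_sum (bigD1 (Ordinal size_es)) //= big1 ?addr0 => [|k ne]; last first.
  rewrite hornerCM (_ : (k == size es :> nat) = false) ?mul0r //.
  by apply: contraNF ne => /eqP k_es; apply/eqP/val_inj.
by rewrite eqxx hornerCM hornerXn mul1r !expf_neq0.
Qed.

End WalkIndicator.

Lemma Meval_neq0 (F : fieldType) (N : network) (alpha : F) (i j : 'I_3) r :
  alpha != 0 -> acyclic N -> (0 < mincut (src N i) (dst N j))%N ->
  Meval N alpha i j r != 0.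
Proof.
move=> alpha_neq0 acyc /reach_of_mincut_gt0/(exists_uniq_walk acyc)[e0 [es []]].
move=> tail_e0 walk_es head_last uniq_w.
have := meval_Meval_neq0 tail_e0 walk_es head_last uniq_w r alpha_neq0.
by apply: contraNneq => ->; rewrite rmorph0.
Qed.

Lemma exists_lec_eval_neq0 (F : finFieldType) (N : network) (q : {mpoly F[nLEC N]}) :
  q != 0 -> exists (L : fieldExtType F) (eps : LEC N -> L), lec_eval eps q != 0.
Proof.
move=> q_neq0; have [L [rs [rs_uniq size_rs]]] := fieldExt_uniq_seq F (msize q).
have q_deg m : m \in msupp q -> forall i, (m i < size rs)%N.
  move=> m_supp i; apply: leq_trans size_rs; apply: leq_ltn_trans (msize_mdeg_lt m_supp).
  by rewrite mdegE (bigD1 i) //= leq_addr.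
have [v v_neq0] := mmap_neq0 (in_alg L) rs_uniq q_neq0 q_deg.
exists L, (fun l => v (enum_rank l)).
by rewrite /lec_eval (eq_mmap _ (h2 := v)) // => k; rewrite enum_valK.
Qed.

Theorem theorem4
  (p m : nat) (F : finFieldType) (N : network) (n' : nat) (alpha : F)
  (Hp : prime p) (HF : #|F| = (p ^ m)%N)
  (Hn' : (0 < n')%N)
  (Hpn : ~~ (p %| (n'.*2).+1)%N)
  (Hnm : ((n'.*2).+1 %| p ^ m - 1)%N)
  (Halpha : ((n'.*2).+1).-primitive_root alpha)
  (Hacyc : acyclic N)
  (Hcut_ii : forall i : 'I_3, mincut (src N i) (dst N i) = 1%N)
  (Hcut_ij : forall i j : 'I_3, i != j -> (1 <= mincut (src N i) (dst N j))%N)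
  (Hrank : rank_conditions
     (Mhat (@to_ratfun F N) alpha n')) :
  exists (L : fieldExtType F) (eps : LEC N -> L),
    (forall i j : 'I_3, Mhat (lec_eval eps) alpha n' i j \in unitmx) /\
    decodable (Mhat (lec_eval eps) alpha n').
Proof.
have alpha_neq0 : alpha != 0.
  apply/eqP => alpha0; move: (prim_expr_order Halpha); rewrite alpha0 expr0n /=.
  by move/eqP; rewrite eq_sym oner_eq0.
pose a i j (r : 'I_(n'.*2).+1) := Meval N alpha i j r.
have a_neq0 i j r : a i j r != 0.
  apply: Meval_neq0 alpha_neq0 Hacyc _.
  by case: (eqVneq i j) => [<-|/Hcut_ij//]; rewrite Hcut_ii.
have poly_neq0 : scheme_poly a != 0.
  rewrite -tofrac_eq0; apply/(scheme_poly_rmorph_neq0 (@tofrac _)).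
  by split=> // i j r; rewrite tofrac_eq0.
have [L [eps eval_neq0]] := exists_lec_eval_neq0 poly_neq0.
pose rho : {rmorphism {mpoly F[nLEC N]} -> L} :=
  mmap (in_alg L) (fun k => eps (enum_val k)).
have [rho_a_neq0 rank_cond] := (scheme_poly_rmorph_neq0 rho a).1 eval_neq0.
exists L, eps; split; first exact: diag_transfer_unit rho_a_neq0.
exact: decodable_rank_conditions rho_a_neq0 rank_cond.
Qed.
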